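(* Let $\mathcal{A}$ be an $S$-ring over a group $G$ of prime order $p$. Suppose that $p\leq 3$ or $\mathrm{rk}(\mathcal{A})>2$. Then $\mathrm{Aut}(\mathcal{A})$ is 2-isolated.
   Context: Let $G$ be a finite group with identity $e$; for $X\subseteq G$ write $\underline{X}=\sum_{x\in X}x\in\mathbb{Z}G$. An $S$-ring over $G$ is a subring $\mathcal{A}\subseteq\mathbb{Z}G$ for which there is a partition $\mathcal{S}(\mathcal{A})$ of $G$ (basic sets) with $\{e\}\in\mathcal{S}(\mathcal{A})$, closed under $X\mapsto X^{-1}$, and $\mathcal{A}=\mathrm{Span}_{\mathbb{Z}}\{\underline{X}:X\in\mathcal{S}(\mathcal{A})\}$; $\mathrm{rk}(\mathcal{A})=|\mathcal{S}(\mathcal{A})|$. For $X\subseteq G$ let $R(X)=\{(g,xg):x\in X,g\in G\}$. The automorphism group $\mathrm{Aut}(\mathcal{A})$ is the group of all permutations $f$ of $G$ with $R(X)^f=R(X)$ for every $X\in\mathcal{S}(\mathcal{A})$. Two permutation groups $K,K'\leq\mathrm{Sym}(\Omega)$ are 2-equivalent if they have the same orbits on $\Omega^2$; $K$ is 2-isolated if $K$ is the only subgroup of $\mathrm{Sym}(\Omega)$ that is 2-equivalent to $K$. *)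

From mathcomp Require Import all_boot all_fingroup.
Set Implicit Arguments.
Unset Strict Implicit.
Unset Printing Implicit Defensive.

Local Open Scope group_scope.

Section SRing.
Variable gT : finGroupType.

(* Coefficient of g in the group-ring product X * Y (underlined sets):
   the number of pairs (x, y) in X x Y with x * y = g. *)
Definition prod_coef (X Y : {set gT}) (g : gT) : nat :=
  #|[set xy in setX X Y | xy.1 * xy.2 == g]|.

(* S is the set of basic sets of an S-ring over the group gT (G = [set: gT]):
   a partition of G containing {e}, closed under inversion, and whose
   Z-span of the elements \underline{X} is closed under multiplication in ZG
   (i.e. each coefficient of \underline{X} \underline{Y} is constant on every
   basic set).  The span is then automatically an additive subgroup
   containing 1 = \underline{{e}}. *)
Definition is_Sring (S : {set {set gT}}) : Prop :=
  [/\ partition S [set: gT],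
      [set 1] \in S,
      (forall X, X \in S -> X^-1 \in S) &
      (forall X Y Z, X \in S -> Y \in S -> Z \in S ->
         forall z z', z \in Z -> z' \in Z -> prod_coef X Y z = prod_coef X Y z')].

Definition Rel (X : {set gT}) : {set gT * gT} :=
  [set (g, x * g) | x in X, g in [set: gT]].

Definition AutS (S : {set {set gT}}) : {set {perm gT}} :=
  [set f : {perm gT} |
     [forall X in S, [set (f ab.1, f ab.2) | ab in Rel X] == Rel X]].

End SRing.

Section TwoClosure.
Variable T : finType.

Definition orbits2 (K : {set {perm T}}) : {set {set T * T}} :=
  [set [set (k ab.1, k ab.2) | k : {perm T} in K] | ab in [set: T * T]].

Definition two_equivalent (K K' : {set {perm T}}) : Prop :=
  orbits2 K = orbits2 K'.

Definition two_isolated (K : {set {perm T}}) : Prop :=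
  forall K' : {group {perm T}}, two_equivalent K' K -> (K' : {set {perm T}}) = K.

End TwoClosure.

(* Identify G with F_p through z |-> g^z, so that a permutation k of G becomes a
   map s of F_p. A group-ring element a acts on functions F_p -> F_p by
   phi |-> sum_z a(z) phi(. + z); if k preserves R(X), then s commutes with the
   action of the indicator of X, hence with that of a = X - |X| e. When
   rk(A) > 2, X can be chosen so that a is non-constant, and a has zero sum.
   Viewing functions on F_p as polynomials of degree < p, the action of a
   lowers the degree of x^m (v <= m < p) by exactly the order v of the first
   non-vanishing moment of a; replacing a by a convolution power, we may
   assume 2v >= p - 1. Comparing degrees in the commutation relation applied
   to x^(j+v), for suitable j, then forces deg s <= 1. So every element of
   Aut(A) is affine on F_p and is determined by its values at 1 and g; for
   p <= 3 this is trivial. A group K' with the same 2-orbits as Aut(A)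
   preserves every R(X), so K' <= Aut(A); conversely every k in Aut(A) agrees
   with some element of K' at 1 and g, hence belongs to K'. *)

From mathcomp Require Import all_boot all_fingroup all_algebra finfield cyclic.
From mathcomp Require Import zify ring.
Set Implicit Arguments. Unset Strict Implicit. Unset Printing Implicit Defensive.
Import GRing.Theory.

Lemma leq1_of_no_multiple_in_gap d n N : 0 < n -> n.*2 <= N -> d <= N ->
  (forall j, 0 < j <= n -> d * j <= N -> d * j <= n) -> d <= 1.
Proof.
move=> n_gt0 le_2n le_dN gap.
have le_dn : d <= n by rewrite -[d]muln1 gap ?n_gt0 ?muln1.
rewrite leqNgt; apply/negP => d_gt1.
have := gap (n %/ d).+1; rewrite mulnS.
have := leq_divM n d; have := ltn_ceil n (ltnW d_gt1).
have := ltn_Pdiv d_gt1 n_gt0; rewrite mulSn [n %/ d * d]mulnC.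
by move: (n %/ d) (d * (n %/ d)) => q m; lia.
Qed.

Section PrimeField.
Variable p : nat.
Hypothesis p_pr : prime p.
Local Notation F := 'F_p.
Local Open Scope ring_scope.
Implicit Types (a b s phi : F -> F) (P Q : {poly F}).

Definition moment a i : F := \sum_(z : F) a z * z ^+ i.
Definition shift_sum a phi y : F := \sum_(z : F) a z * phi (y + z).
Definition conv a b w : F := \sum_(z : F) a z * b (w - z).
Definition dirac0 (z : F) : F := (z == 0)%:R.

Definition intertwines s a :=
  forall phi y, shift_sum a (phi \o s) y = shift_sum a phi (s y).

Definition moment_order a v :=
  (forall k, (k < v)%N -> moment a k = 0) /\ moment a v != 0.

Let p_gt1 : (1 < p)%N := prime_gt1 p_pr.

Lemma eq_shift_sum a phi phi' y :
  phi =1 phi' -> shift_sum a phi y = shift_sum a phi' y.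
Proof. by move=> e; apply: eq_bigr => z _; rewrite e. Qed.

Lemma shift_sum_conv a b phi y :
  shift_sum (conv a b) phi y = shift_sum a (shift_sum b phi) y.
Proof.
rewrite /shift_sum /conv; under eq_bigr do rewrite mulr_suml.
rewrite exchange_big /=; apply: eq_bigr => z _.
rewrite mulr_sumr (reindex_inj (addIr z)) /=; apply: eq_bigr => u _.
by rewrite addrK mulrA addrA [y + u + z]addrAC.
Qed.

Lemma shift_sum_dirac0 phi y : shift_sum dirac0 phi y = phi y.
Proof.
rewrite /shift_sum (bigD1 0) //= big1 => [|z /negbTE nz]; last by rewrite /dirac0 nz mul0r.
by rewrite /dirac0 eqxx mul1r addr0 addr0.
Qed.

Lemma sum_dirac0 : \sum_(z : F) dirac0 z = 1.
Proof. by rewrite -(shift_sum_dirac0 (fun=> 1) 0); apply: eq_bigr => z _; rewrite mulr1. Qed.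

Lemma intertwines_conv s a b :
  intertwines s a -> intertwines s b -> intertwines s (conv a b).
Proof.
move=> sa sb phi y; rewrite !shift_sum_conv (eq_shift_sum _ _ (sb phi)).
exact: sa.
Qed.

Lemma intertwines_comb s a b c : intertwines s a -> intertwines s b ->
  intertwines s (fun z => a z + c * b z).
Proof.
move=> sa sb phi y.
have comb phi' y' : shift_sum (fun z => a z + c * b z) phi' y'
    = shift_sum a phi' y' + c * shift_sum b phi' y'.
  by rewrite /shift_sum mulr_sumr -big_split; apply: eq_bigr => z _; rewrite mulrDl !mulrA.
by rewrite !comb sa sb.
Qed.

Lemma intertwines_dirac0 s : intertwines s dirac0.
Proof. by move=> phi y; rewrite !shift_sum_dirac0. Qed.

Lemma moment_conv a b i :
  moment (conv a b) i = \sum_(k < i.+1) 'C(i, k)%:R * moment a k * moment b (i - k).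
Proof.
rewrite /moment /conv; under eq_bigr do rewrite mulr_suml.
rewrite exchange_big /=.
transitivity (\sum_(z : F) \sum_(u : F) \sum_(k < i.+1)
    'C(i, k)%:R * (a z * z ^+ k) * (b u * u ^+ (i - k))).
  apply: eq_bigr => z _; rewrite (reindex_inj (addIr z)) /=; apply: eq_bigr => u _.
  by rewrite addrK exprDn mulr_sumr; apply: eq_bigr => k _; rewrite -mulr_natl; ring.
under [LHS]eq_bigr do rewrite exchange_big /=.
rewrite exchange_big /=; apply: eq_bigr => k _.
rewrite -mulrA big_distrlr mulr_sumr; apply: eq_bigr => z _.
by rewrite mulr_sumr; apply: eq_bigr => u _; rewrite /= !mulrA.
Qed.

Lemma prime_ndvd_fact j : (j < p)%N -> ~~ (p %| j`!)%N.
Proof.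
elim: j => [_ | j IH lt_jp]; first by rewrite fact0 dvdn1 neq_ltn p_gt1 orbT.
by rewrite factS Euclid_dvdM // negb_or IH ?(ltnW lt_jp) // andbT gtnNdvd.
Qed.

Lemma natr_bin_neq0 j k : (j < p)%N -> (k <= j)%N -> ('C(j, k)%:R : F) != 0.
Proof.
move=> lt_jp le_kj; apply: contraNneq (prime_ndvd_fact lt_jp) => bin0.
have p_dvd_bin : (p %| 'C(j, k))%N by rewrite /dvdn -(val_Fp_nat p_pr) bin0.
by rewrite -(bin_fact le_kj) dvdn_mulr.
Qed.

Lemma moment_order_conv a b v w : moment_order a v -> moment_order b w ->
  (v + w < p)%N -> moment_order (conv a b) (v + w)%N.
Proof.
move=> [a0 av] [b0 bw] lt_p.
have vanish i k : (k < v)%N || (i - k < w)%N ->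
    'C(i, k)%:R * moment a k * moment b (i - k) = 0.
  by case/orP=> [/a0 -> | /b0 ->]; rewrite ?mulr0 ?mul0r.
split=> [i lt_i | ].
  rewrite moment_conv big1 // => k _; apply: vanish.
  by move: (ltn_ord k) lt_i; clear; lia.
have lt_v : (v < (v + w).+1)%N by rewrite ltnS leq_addr.
rewrite moment_conv (bigD1 (Ordinal lt_v)) //= big1 => [|k /eqP ne_kv].
  by rewrite addr0 addKn !mulf_neq0 // natr_bin_neq0 // leq_addr.
apply: vanish; have {}ne_kv : (k != v :> nat) by apply/eqP => e; apply: ne_kv; apply: val_inj.
by move: (ltn_ord k) ne_kv; clear; lia.
Qed.

Lemma expr_pred_Fp (x : F) : x ^+ p.-1 = (x != 0)%:R.
Proof.
have [-> | nz_x] := eqVneq x 0.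
  by rewrite expr0n; case: (p) p_gt1 => [|[|]].
apply: (mulfI nz_x); rewrite mulr1 -exprS prednK ?prime_gt0 //.
by have := expf_card x; rewrite card_Fp.
Qed.

Lemma polyfun_Fp phi : exists2 P : {poly F}, (size P <= p)%N & phi =1 horner P.
Proof.
exists (\sum_(c : F) phi c *: (1 - ('X - c%:P) ^+ p.-1)).
  rewrite (leq_trans (size_sum _ _ _)) //; apply/bigmax_leqP => c _.
  rewrite (leq_trans (size_scale_leq _ _)) // (leq_trans (size_polyD _ _)) //.
  by rewrite size_polyN size_exp_XsubC prednK ?prime_gt0 // geq_max size_poly1 prime_gt0 /=.
move=> y; rewrite horner_sum (bigD1 y) //= big1 => [|c ne_cy].
  by rewrite !hornerE expr_pred_Fp subrr eqxx /= subr0 mulr1.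
by rewrite !hornerE expr_pred_Fp subr_eq0 eq_sym ne_cy subrr mulr0.
Qed.

Lemma eq_poly_Fp P Q : (size P <= p)%N -> (size Q <= p)%N ->
  (forall y, P.[y] = Q.[y]) -> P = Q.
Proof.
move=> sP sQ eqPQ; apply/eqP; rewrite -subr_eq0; apply/negP => /negP nz.
have roots : all (root (P - Q)) (enum F).
  by apply/allP => y _; rewrite rootE !hornerE eqPQ subrr.
have := max_poly_roots nz roots (enum_uniq F); rewrite -cardE (card_Fp p_pr) ltnNge.
by rewrite (leq_trans (size_polyD _ _)) // size_polyN geq_max sP sQ.
Qed.

Definition shift_poly b i : {poly F} :=
  \poly_(k < i.+1) ('C(i, k)%:R * moment b (i - k)).

Lemma horner_shift_poly b i y :
  (shift_poly b i).[y] = shift_sum b (fun x => x ^+ i) y.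
Proof.
rewrite horner_poly /shift_sum; under [RHS]eq_bigr do rewrite addrC exprDn mulr_sumr.
rewrite [RHS]exchange_big /=; apply: eq_bigr => k _.
by rewrite /moment mulr_sumr mulr_suml; apply: eq_bigr => z _; rewrite -mulr_natl; ring.
Qed.

Lemma size_shift_poly_le b v i :
  moment_order b v -> (size (shift_poly b i) <= (i - v).+1)%N.
Proof.
move=> [b0 _]; apply/leq_sizeP => k le_k; rewrite coef_poly.
by case: ifP => // lt_ki; rewrite b0 ?mulr0 //; move: le_k lt_ki; clear; lia.
Qed.

Lemma size_shift_poly b v j : moment_order b v -> (j + v < p)%N ->
  size (shift_poly b (j + v)) = j.+1.
Proof.
move=> ob lt_p; have [_ bv] := ob.
apply/eqP; rewrite eqn_leq; have := size_shift_poly_le (j + v) ob; rewrite addnK => -> /=.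
rewrite ltnNge; apply/negP => /leq_sizeP/(_ j (leqnn j)); apply/eqP.
by rewrite coef_poly ltnS leq_addr addKn mulf_neq0 // natr_bin_neq0 // leq_addr.
Qed.

Lemma polyfun_shift_sum b v phi : moment_order b v ->
  exists2 Q : {poly F}, (size Q <= (p.-1 - v).+1)%N & shift_sum b phi =1 horner Q.
Proof.
move=> ob; have [P sP eP] := polyfun_Fp phi.
exists (\sum_(i < size P) P`_i *: shift_poly b i).
  rewrite (leq_trans (size_sum _ _ _)) //; apply/bigmax_leqP => i _.
  rewrite (leq_trans (size_scale_leq _ _)) // (leq_trans (size_shift_poly_le i ob)) //.
  by rewrite ltnS leq_sub2r // -ltnS prednK ?prime_gt0 // (leq_trans (ltn_ord i)).
move=> y; rewrite horner_sum (eq_shift_sum _ _ eP).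
under [RHS]eq_bigr do rewrite hornerZ horner_shift_poly.
rewrite /shift_sum; under [LHS]eq_bigr do rewrite horner_coef mulr_sumr.
rewrite exchange_big /=; apply: eq_bigr => i _.
by rewrite mulr_sumr; apply: eq_bigr => z _; ring.
Qed.

(* The action of [b] lowers degrees by [v], while composing with [s] multiplies
   them by deg s as long as no reduction modulo x^p - x occurs. *)
Lemma intertwines_size_comp s b v P j : intertwines s b -> moment_order b v ->
  (size P <= p)%N -> s =1 horner P -> (j + v < p)%N -> ((size P).-1 * j < p)%N ->
  ((size P).-1 * j <= p.-1 - v)%N.
Proof.
move=> isb ob sP eP lt_jv lt_dj.
have [Q sQ eQ] := polyfun_shift_sum ((fun x => x ^+ (j + v)) \o s) ob.
have compE : shift_poly b (j + v) \Po P = Q.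
  apply: eq_poly_Fp => [||y].
  - by rewrite (leq_trans (size_comp_poly_leq _ _)) // size_shift_poly //= mulnC.
  - by rewrite (leq_trans sQ) //; move: p_gt1; clear; lia.
  - by rewrite -eQ isb horner_comp -eP horner_shift_poly.
have := size_comp_poly (shift_poly b (j + v)) P.
rewrite compE size_shift_poly //= mulnC => <-.
by rewrite -subn1 leq_subLR add1n.
Qed.

Lemma intertwines_affine_of_large_order s b v : intertwines s b -> moment_order b v ->
  (v <= p.-2)%N -> (p.-1 <= v.*2)%N -> exists c0 c1, forall y, s y = c0 + c1 * y.
Proof.
move=> isb ob le_v le_2v; have [P sP eP] := polyfun_Fp s.
have le_d1 : ((size P).-1 <= 1)%N.
  apply: (@leq1_of_no_multiple_in_gap _ (p.-1 - v) p.-1).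
  - by move: p_gt1 le_v; clear; lia.
  - by move: le_2v; clear; lia.
  - by move: sP; clear; lia.
  move=> j /andP[j_gt0 le_j] le_dj; apply: (intertwines_size_comp isb ob sP eP).
    by move: p_gt1 le_v le_j; clear; lia.
  by rewrite (leq_ltn_trans le_dj) // ltn_predL prime_gt0.
exists P`_0, P`_1 => y; rewrite eP (@horner_coef_wide _ 2); last by move: le_d1; clear; lia.
by rewrite big_ord_recl big_ord1 expr0 mulr1 expr1.
Qed.

Lemma intertwines_large_order s a v : intertwines s a -> moment_order a v ->
  (0 < v <= p.-2)%N ->
  exists b w, [/\ intertwines s b, moment_order b w, (w <= p.-2)%N & (p.-1 <= w.*2)%N].
Proof.
move=> + + /andP[]; have [m] := ubnP (p - v).
elim: m a v => // m IH a v lt_m isa oa v_gt0 le_v.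
have [large | small] := leqP p.-1 v.*2; first by exists a, v.
apply: (IH (conv a a) (v + v)%N).
- by move: p_gt1 lt_m v_gt0 small; clear; lia.
- exact: intertwines_conv.
- by apply: (moment_order_conv oa oa); move: p_gt1 small; clear; lia.
- by move: v_gt0; clear; lia.
- by move: p_gt1 small; clear; lia.
Qed.

Lemma sum_mul_horner a Q :
  \sum_(z : F) a z * Q.[z] = \sum_(i < size Q) Q`_i * moment a i.
Proof.
under eq_bigr do rewrite horner_coef mulr_sumr.
rewrite exchange_big /=; apply: eq_bigr => i _.
by rewrite /moment mulr_sumr; apply: eq_bigr => z _; ring.
Qed.

Lemma moments_eq0_const a :
  (forall i, (i <= p.-2)%N -> moment a i = 0) -> forall x y, a x = a y.
Proof.
move=> a0.
suff aE c : a c = \sum_(z : F) a z - moment a p.-1 by move=> x y; rewrite !aE.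
have lc : (('X - c%:P) ^+ p.-1)`_p.-1 = 1.
  by have /monicP := monic_exp p.-1 (monicXsubC c); rewrite lead_coefE size_exp_XsubC.
have rhs : \sum_(i < size (('X - c%:P) ^+ p.-1)) (('X - c%:P) ^+ p.-1)`_i * moment a i
    = moment a p.-1.
  rewrite size_exp_XsubC big_ord_recr /= lc mul1r big1 ?add0r // => i _.
  by rewrite a0 ?mulr0 //; move: (ltn_ord i); clear; lia.
have lhs : \sum_(z : F) a z * (('X - c%:P) ^+ p.-1).[z] = \sum_(z : F) a z - a c.
  under eq_bigr do rewrite !hornerE expr_pred_Fp subr_eq0.
  rewrite [in RHS](bigD1 c) //= addrC addrK (bigD1 c) //= eqxx mulr0 add0r.
  by apply: eq_bigr => z ne_zc; rewrite ne_zc mulr1.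
by rewrite -rhs -sum_mul_horner lhs opprB addrC subrK.
Qed.

Lemma exists_moment_order a : moment a 0 = 0 -> (exists x y, a x != a y) ->
  exists2 v, moment_order a v & (0 < v <= p.-2)%N.
Proof.
move=> a0 [x [y ne_axy]].
have [i nz_i | all0] := pickP (fun i : 'I_p.-1 => moment a i != 0); last first.
  case/negP: ne_axy; apply/eqP/moments_eq0_const => i le_i.
  have lt_i : (i < p.-1)%N by move: p_gt1 le_i; clear; lia.
  by move: (all0 (Ordinal lt_i)) => /negbFE/eqP.
have ex : exists i, (i <= p.-2)%N && (moment a i != 0).
  by exists i; rewrite nz_i andbT; move: (ltn_ord i); clear; lia.
case: (ex_minnP ex) => v /andP[le_v nz_v] min_v.
exists v; last first.
  by apply/andP; split=> //; rewrite lt0n; apply: contraNneq nz_v => ->; rewrite a0.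
split=> // k lt_kv; have le_k : (k <= p.-2)%N by move: lt_kv le_v; clear; lia.
by apply/eqP; move: lt_kv; apply: contraTT => nz_k; rewrite -leqNgt min_v // le_k.
Qed.

Lemma intertwines_affine s a : intertwines s a -> moment a 0 = 0 ->
  (exists x y, a x != a y) -> exists c0 c1, forall y, s y = c0 + c1 * y.
Proof.
move=> isa a0 nonconst; have [v oa v_range] := exists_moment_order a0 nonconst.
have [b [w [isb ob le_w le_2w]]] := intertwines_large_order isa oa v_range.
exact: intertwines_affine_of_large_order isb ob le_w le_2w.
Qed.

End PrimeField.

Section SringAutomorphisms.
Variable gT : finGroupType.
Implicit Types (S : {set {set gT}}) (X : {set gT}) (k : {perm gT}).
Local Open Scope group_scope.

Lemma mem_Rel X a b : ((a, b) \in Rel X) = (b * a^-1 \in X).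
Proof.
apply/imset2P/idP => [[x c xX _ [-> ->]] | baX]; first by rewrite mulgK.
by exists (b * a^-1) a; rewrite ?inE ?mulgKV.
Qed.

Lemma AutSP S k : reflect
  (forall X, X \in S -> forall a b, (a, b) \in Rel X -> (k a, k b) \in Rel X)
  (k \in AutS S).
Proof.
apply: (iffP idP) => [+ X XS a b abX | kRel].
  by rewrite inE => /forall_inP/(_ X XS)/eqP <-; apply/imsetP; exists (a, b).
rewrite inE; apply/forall_inP => X XS; rewrite eqEcard card_imset ?leqnn ?andbT.
  by apply/subsetP => _ /imsetP[[a b] abX ->]; exact: kRel.
by move=> [a b] [c d] /= [/perm_inj -> /perm_inj ->].
Qed.

Lemma AutS_group_set S : group_set (AutS S).
Proof.
apply/group_setP; split=> [|k k' /AutSP kA /AutSP k'A]; apply/AutSP.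
  by move=> X _ a b; rewrite !perm1.
by move=> X XS a b abX; rewrite !permM; apply/k'A/kA.
Qed.

Canonical AutS_group S := group (AutS_group_set S).

End SringAutomorphisms.

Section CyclicOfPrimeOrder.
Variables (gT : finGroupType) (g : gT).
Hypotheses (gT_prime : prime #|gT|) (g_gen : #[g]%g = #|gT|).
Local Notation F := 'F_#|gT|.
Local Open Scope ring_scope.

Definition gexp (z : F) : gT := (g ^+ z)%g.

Lemma gexpD z w : gexp (z + w) = (gexp z * gexp w)%g.
Proof.
rewrite /gexp -expgD -[in RHS]expg_mod_order g_gen; congr (g ^+ _)%g.
by congr (_ %% _)%N; exact: Fp_cast.
Qed.

Lemma gexp_inj : injective gexp.
Proof.
have lt_z (z : F) : (z < #|gT|)%N by rewrite -[X in (_ < X)%N](Fp_cast gT_prime).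
move=> z w /eqP; rewrite /gexp eq_expg_mod_order g_gen !modn_small // => /eqP.
exact: val_inj.
Qed.

Let gexp_onto x : x \in codom gexp :=
  inj_card_onto gexp_inj (eq_leq (esym (card_Fp gT_prime))) x.

Definition glog (x : gT) : F := iinv (gexp_onto x).

Lemma glogK : cancel glog gexp.
Proof. by move=> x; apply: f_iinv. Qed.

Lemma gexp0 : gexp 0 = 1%g.
Proof. exact: expg0. Qed.

Lemma gexp1 : gexp 1 = g.
Proof. by rewrite /gexp /= Fp_cast // modn_small ?prime_gt1 // expg1. Qed.

Lemma gexpB z w : gexp (z - w) = (gexp z * (gexp w)^-1)%g.
Proof. by rewrite -[in RHS](subrK w z) [in RHS]gexpD mulgK. Qed.

Definition perm_Fp (k : {perm gT}) (z : F) : F := glog (k (gexp z)).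

Definition indicator (X : {set gT}) (z : F) : F := (gexp z \in X)%:R.

Lemma shift_sum_indicator X phi y :
  shift_sum (indicator X) phi y = \sum_(z | gexp z \in X) phi (y + z).
Proof.
rewrite /shift_sum [RHS]big_mkcond; apply: eq_bigr => z _.
by rewrite /indicator; case: (gexp z \in X); rewrite ?mul1r ?mul0r.
Qed.

Lemma intertwines_indicator (k : {perm gT}) X :
  (forall a b, (a, b) \in Rel X -> (k a, k b) \in Rel X) ->
  intertwines (perm_Fp k) (indicator X).
Proof.
move=> kRel phi y; rewrite !shift_sum_indicator /=.
set A := [set z : F | gexp z \in X].
pose h z := perm_Fp k (y + z) - perm_Fp k y.
have h_inj : injective h.
  move=> z w /addIr/(congr1 gexp); rewrite /perm_Fp !glogK => /perm_inj/gexp_inj.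
  exact: addrI.
have hA : h @: A = A.
  apply/eqP; rewrite eqEcard card_imset // leqnn andbT.
  apply/subsetP => _ /imsetP[z zA ->]; move: zA.
  rewrite !inE gexpB /perm_Fp !glogK => zX.
  by rewrite -mem_Rel kRel // mem_Rel -gexpB addrC addKr.
rewrite (eq_bigl (fun z => z \in A)) => [|z]; last by rewrite inE.
rewrite [RHS](eq_bigl (fun z => z \in A)) => [|z]; last by rewrite inE.
rewrite -[in RHS]hA big_imset /= => [|z w _ _ /h_inj //].
by apply: eq_bigr => z _; rewrite /h subrKC.
Qed.

Lemma glog_eq0 x : (glog x == 0) = (x == 1%g).
Proof. by rewrite -(inj_eq gexp_inj) glogK gexp0. Qed.

Lemma perm_Fp_affine (k : {perm gT}) X x y :
  (forall a b, (a, b) \in Rel X -> (k a, k b) \in Rel X) ->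
  x \in X -> x != 1%g -> y \notin X -> y != 1%g ->
  exists c0 c1, forall z, perm_Fp k z = c0 + c1 * z.
Proof.
move=> kRel xX x1 yX y1.
pose a z := indicator X z + (- \sum_(w : F) indicator X w) * dirac0 z.
apply: (@intertwines_affine _ gT_prime _ a).
- by apply: intertwines_comb; [exact: intertwines_indicator | exact: intertwines_dirac0].
- rewrite /moment /a; under eq_bigr do rewrite expr0 mulr1.
  by rewrite big_split /= -mulr_sumr sum_dirac0 mulr1 subrr.
- exists (glog x), (glog y); rewrite /a /indicator /dirac0 !glogK xX (negbTE yX).
  by rewrite !glog_eq0 (negbTE x1) (negbTE y1) !mulr0 !addr0 oner_neq0.
Qed.

Lemma AutS_eq_of_separated (S : {set {set gT}}) (X : {set gT}) (x y : gT)
    (k k' : {perm gT}) :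
  X \in S -> x \in X -> x != 1%g -> y \notin X -> y != 1%g ->
  k \in AutS S -> k' \in AutS S -> k 1%g = k' 1%g -> k g = k' g -> k = k'.
Proof.
move=> XS xX x1 yX y1 /AutSP kA /AutSP k'A k1 kg.
have [c0 [c1 kE]] := perm_Fp_affine (kA X XS) xX x1 yX y1.
have [d0 [d1 k'E]] := perm_Fp_affine (k'A X XS) xX x1 yX y1.
have e0 : c0 = d0.
  by move: (kE 0) (k'E 0); rewrite /perm_Fp gexp0 k1 !mulr0 !addr0 => <- <-.
have e1 : c1 = d1.
  by move: (kE 1) (k'E 1); rewrite /perm_Fp gexp1 kg !mulr1 e0 => -> /addrI.
apply/permP => w.
have : perm_Fp k (glog w) = perm_Fp k' (glog w) by rewrite kE k'E e0 e1.
by rewrite /perm_Fp glogK => /(congr1 gexp); rewrite !glogK.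
Qed.

End CyclicOfPrimeOrder.

Section PermutationsAndPartitions.
Variable T : finType.
Local Open Scope group_scope.

Lemma two_equivalent_pair (K K' : {group {perm T}}) k a b :
  two_equivalent K K' -> k \in K -> exists2 h, h \in K' & h a = k a /\ h b = k b.
Proof.
move=> equiv kK.
have /imsetP[[c d] _ orbE] : [set (k' a, k' b) | k' : {perm T} in K] \in orbits2 K'.
  by rewrite -equiv; apply/imsetP; exists (a, b).
set O := [set _ | _ in K'] in orbE.
have /imsetP[h1 h1K [ac bd]] : (a, b) \in O.
  by rewrite -orbE; apply/imsetP; exists 1; rewrite ?group1 ?perm1.
have /imsetP[h2 h2K [kac kbd]] : (k a, k b) \in O.
  by rewrite -orbE; apply/imsetP; exists k.
exists (h1^-1 * h2); first by rewrite groupM ?groupV.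
by rewrite kac kbd !permM ac bd !permK.
Qed.

Lemma perm_eq_on_two (k k' : {perm T}) x y : #|T| <= 3 -> x != y ->
  k x = k' x -> k y = k' y -> k = k'.
Proof.
move=> T_small xy kx ky; apply/permP => w; apply/eqP/negPn/negP => kw.
have wx : w != x by apply: contraNneq kw => ->; rewrite kx.
have wy : w != y by apply: contraNneq kw => ->; rewrite ky.
have : uniq [:: k x; k y; k w; k' w].
  rewrite /= !inE !negb_or !(inj_eq perm_inj) kx ky !(inj_eq perm_inj).
  by rewrite xy !(eq_sym _ w) wx wy kw.
move/card_uniqP => /= card4; have := max_card (mem [:: k x; k y; k w; k' w]).
by rewrite card4; lia.
Qed.

Lemma partition_separated (P : {set {set T}}) t :
  partition P [set: T] -> [set t] \in P -> 2 < #|P| ->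
  exists X x y, [/\ X \in P, x \in X, x != t, y \notin X & y != t].
Proof.
case/and3P=> _ trivP P0 Pt P_gt2.
have : 1 < #|P :\ [set t]| by rewrite (cardsD1 [set t] P) Pt in P_gt2.
case/card_gt1P => X [Y [/setD1P[Xt XP] /setD1P[Yt YP] XY]].
have [x xX] : exists x, x \in X by apply/set0Pn; apply: contraNneq P0 => <-.
have [y yY] : exists y, y \in Y by apply/set0Pn; apply: contraNneq P0 => <-.
have notin_t Z z : Z \in P -> Z != [set t] -> z \in Z -> z != t.
  move=> ZP Zt zZ; apply: contraTneq zZ => ->.
  by rewrite (disjointFl (trivIsetP trivP _ _ ZP Pt Zt)) ?set11.
exists X, x, y; split=> //; [exact: notin_t xX | | exact: notin_t yY].
by rewrite (disjointFl (trivIsetP trivP _ _ XP YP XY) yY).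
Qed.

End PermutationsAndPartitions.

Theorem lemma2p8 (gT : finGroupType) (S : {set {set gT}}) :
  prime #|[set: gT]| -> is_Sring S ->
  (#|[set: gT]| <= 3 \/ 2 < #|S|) ->
  two_isolated (AutS S).
Proof.
move=> G_prime [partS S1 _ _] small_or_rank K' equiv.
have [g g_gen] : exists g : gT, #[g]%g = #|gT|.
  by have /cyclicP[g defG] := prime_cyclic G_prime; exists g; rewrite /order -defG cardsT.
rewrite cardsT in G_prime small_or_rank.
have rigid k k' : k \in AutS S -> k' \in AutS S -> k 1%g = k' 1%g -> k g = k' g -> k = k'.
  case: small_or_rank => [small | large].
    move=> _ _; apply: perm_eq_on_two small _.
    by rewrite eq_sym -order_gt1 g_gen prime_gt1.
  have [X [x [y [XS xX x1 yX y1]]]] := partition_separated partS S1 large.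
  exact: (AutS_eq_of_separated G_prime g_gen XS xX x1 yX y1).
have K'sub : K' \subset AutS S.
  apply/subsetP => k kK; apply/AutSP => X XS a b abX.
  have [h /AutSP hA [<- <-]] := two_equivalent_pair a b equiv kK.
  exact: hA.
apply/eqP; rewrite eqEsubset K'sub; apply/subsetP => k kA.
have [h hK [h1 hg]] := two_equivalent_pair 1%g g (esym equiv) kA.
by rewrite (rigid k h) // (subsetP K'sub).
Qed.
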